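(* In the setting below, every chain $Z$ in $\tilde H$ is a simple path, i.e. no vertex of $H$ appears on $Z$ more than once.
   Context: Setting: $G$ is a graph; $S_1,T_1,S_2,T_2\subseteq V(G)$ are pairwise disjoint sets of $k$ vertices each, all of degree $1$ in $G$, with $(S_1,T_1)$ and $(S_2,T_2)$ each routable in $G$ (connected by $k$ node-disjoint paths). $H$ is an $(S_1,T_1,S_2,T_2)$-minimal minor of $G$: a minor of $G$ containing the vertices of $S_1\cup T_1\cup S_2\cup T_2$ as vertices (each with singleton branch set), in which both pairs are routable, and such that deleting or contracting any edge of $H$ destroys one of these properties. $\mathcal{R}$ (red paths) is a set of $k$ node-disjoint paths routing $(S_1,T_1)$ in $H$, and $\mathcal{B}$ (blue paths) is a set of $k$ node-disjoint paths routing $(S_2,T_2)$ in $H$. $\tilde H$ is the directed graph on $V(H)$ whose edges are the edges of red paths directed from $S_1$ toward $T_1$ (red edges) and the edges of blue paths directed from $S_2$ toward $T_2$ (blue edges). A chain is a directed (not necessarily simple) walk $e_1,e_2,\dots,e_r$ in $\tilde H$ whose edges alternate in color (all odd-indexed edges red and all even-indexed blue, or vice versa). *)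

(* Simple graphs on finite types: a graph is a vertex set
   V : {set T} together with a symmetric irreflexive relation e : rel T
   (only edges between vertices of V matter). *)
From mathcomp Require Import all_boot.
Set Implicit Arguments. Unset Strict Implicit. Unset Printing Implicit Defensive.

Section Graphs.
Variable T : finType.

Definition sym_irrefl (e : rel T) : Prop :=
  (forall x y, e x y = e y x) /\ (forall x, e x x = false).

Definition degree (V : {set T}) (e : rel T) (x : T) : nat :=
  #|[set y in V | e x y]|.

Definition gpath (V : {set T}) (e : rel T) (p : seq T) : bool :=
  if p is x :: q then [&& path e x q, uniq p & all (fun z => z \in V) p]
  else false.

Definition first_v (p : seq T) : option T := ohead p.
Definition last_v (p : seq T) : option T :=
  if p is x :: q then Some (last x q) else None.

Definition linkage (V : {set T}) (e : rel T) (k : nat) (S Tt : {set T})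
    (P : seq (seq T)) : Prop :=
  [/\ size P = k,
      (forall p, p \in P ->
         [/\ gpath V e p,
             (exists2 s, first_v p = Some s & s \in S) &
             (exists2 t, last_v p = Some t & t \in Tt)]) &
      pairwise (fun p q : seq T => [disjoint p & q]) P].

Definition routable (V : {set T}) (e : rel T) (k : nat) (S Tt : {set T}) : Prop :=
  exists P, linkage V e k S Tt P.

Definition del_edge (e : rel T) (u v : T) : rel T :=
  fun x y => e x y && ~~ (((x == u) && (y == v)) || ((x == v) && (y == u))).

(* contraction of the edge uv: v is merged into u; vertex set becomes V :\ v *)
Definition contr_edge (e : rel T) (u v : T) : rel T :=
  fun x y => [&& x != v, y != v, x != y &
                 [|| e x y, (x == u) && e v y | (y == u) && e x v]].

(* (VH,eH) is a minor of (TG,eG) with model phi (each vertex x of H is a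
   representative of its branch set phi x): branch sets contain their
   representative, are connected in G, pairwise disjoint, and every edge of H
   is realised by an edge of G between the branch sets. *)
Definition minor_model (eG : rel T) (VH : {set T}) (eH : rel T)
    (phi : T -> {set T}) : Prop :=
  [/\ (forall x, x \in VH -> x \in phi x),
      (forall x, x \in VH -> forall a b, a \in phi x -> b \in phi x ->
          connect (fun c d => [&& eG c d, c \in phi x & d \in phi x]) a b),
      (forall x y, x \in VH -> y \in VH -> x != y -> [disjoint phi x & phi y]) &
      (forall x y, x \in VH -> y \in VH -> eH x y ->
          exists a b, [/\ a \in phi x, b \in phi y & eG a b])].

(* directed coloured edges of H~ : red (c = true) from the red paths,
   blue (c = false) from the blue paths, oriented along the path sequences *)
Definition path_edge (P : seq (seq T)) (x y : T) : bool :=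
  has (fun p => (x, y) \in zip p (behead p)) P.

Definition col_edge (R B : seq (seq T)) (c : bool) (x y : T) : bool :=
  if c then path_edge R x y else path_edge B x y.

(* the walk with vertex sequence x :: xs (edges e_1..e_r, r = size xs) is a
   chain whose first edge has colour c and colours alternate *)
Definition chain (R B : seq (seq T)) (c : bool) (x : T) (xs : seq T) : Prop :=
  forall i, i < size xs ->
    col_edge R B (addb c (odd i)) (nth x (x :: xs) i) (nth x xs i).

End Graphs.

(* If a chain revisits a vertex, cutting it at its first repetition leaves a
   simple closed walk whose edges alternate between red and blue (except possibly
   where it closes up).  No edge of H lies on both a red and a blue path: a
   terminal has degree one in H, so it can only be an end of a path, and red and
   blue terminals are distinct; hence both ends of a common edge are
   non-terminals, and contracting it keeps both linkages, against minimality.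
   So the closed walk has length at least three; say its first edge y0 y1 is red.
   Following the red paths off the walk, and the blue edges of the walk
   backwards, yields a red linkage avoiding y0 y1, while the blue paths do not
   use y0 y1 at all; so deleting y0 y1 keeps both pairs routable, against
   minimality again. *)

From mathcomp Require Import all_boot zify.
Set Implicit Arguments. Unset Strict Implicit. Unset Printing Implicit Defensive.

Section ZipBehead.
Variable T : eqType.
Implicit Types (p : seq T) (x y : T).

Lemma size_zip_behead p : size (zip p (behead p)) = (size p).-1.
Proof. by rewrite size_zip size_behead; apply/minn_idPr; apply: leq_pred. Qed.

Lemma zip_beheadP x0 p x y :
  reflect (exists2 i, i.+1 < size p & nth x0 p i = x /\ nth x0 p i.+1 = y)
          ((x, y) \in zip p (behead p)).
Proof.
apply: (iffP (nthP (x0, x0))) => [[i hi]|[i hi [<- <-]]].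
  rewrite nth_zip_cond hi nth_behead => -[<- <-].
  by exists i => //; move: hi; rewrite size_zip_behead; lia.
have hi' : i < size (zip p (behead p)) by rewrite size_zip_behead; lia.
by exists i => //; rewrite nth_zip_cond hi' nth_behead.
Qed.

Lemma zip_behead_cat p x y :
  (x, y) \in zip p (behead p) -> exists l r, p = l ++ x :: y :: r.
Proof.
case/(zip_beheadP x) => i hi [hx hy]; exists (take i p), (drop i.+2 p).
by rewrite -hx -hy -(drop_nth x hi) -drop_nth ?cat_take_drop //; lia.
Qed.

Lemma mem_zip_behead p x y : (x, y) \in zip p (behead p) -> (x \in p) && (y \in p).
Proof. by case/zip_behead_cat => l [r ->]; rewrite !(mem_cat, inE) !eqxx !orbT. Qed.

End ZipBehead.

Section EdgeNotions.
Variable T : finType.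

Definition unique_nbr (e : rel T) (x : T) := forall y z, e x y -> e x z -> y = z.

Definition edge_disjoint (P Q : seq (seq T)) := forall u v,
  ~~ ((path_edge P u v || path_edge P v u) && (path_edge Q u v || path_edge Q v u)).

End EdgeNotions.

Section Linkage.
Variables (T : finType) (V : {set T}) (e : rel T) (k : nat) (S Tt : {set T}).
Variable P : seq (seq T).
Hypothesis hP : linkage V e k S Tt P.
Implicit Types (p q : seq T) (x y z : T).

Lemma linkage_gpath p : p \in P -> gpath V e p.
Proof. by case: hP => _ hp _ /hp[]. Qed.

Lemma linkage_uniq p : p \in P -> uniq p.
Proof. by move/linkage_gpath; case: p => // x q /and3P[]. Qed.

Lemma linkage_sub p : p \in P -> {subset p <= V}.
Proof. by move/linkage_gpath; case: p => // a q /and3P[_ _ /allP]. Qed.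

Lemma linkage_nth_edge p x0 i : p \in P -> i.+1 < size p ->
  e (nth x0 p i) (nth x0 p i.+1).
Proof. by move/linkage_gpath; case: p => // a q /and3P[/(pathP x0) he _ _] /he. Qed.

Lemma linkage_head_mem p x0 : p \in P -> head x0 p \in p.
Proof. by move/linkage_gpath; case: p => //= a q _; rewrite mem_head. Qed.

Lemma linkage_head p x0 : p \in P -> head x0 p \in S.
Proof. by case: hP => _ hp _ /hp[_ [s]]; case: p => //= a q [->]. Qed.

Lemma linkage_last p x0 : p \in P -> last x0 p \in Tt.
Proof. by case: hP => _ hp _ /hp[_ _ [t]]; case: p => //= a q [->]. Qed.

Lemma linkage_same_path p q x : p \in P -> q \in P -> x \in p -> x \in q -> p = q.
Proof.
case: hP => _ _ /(pairwiseP [::]) hdis /(nthP [::])[i hi <-] /(nthP [::])[j hj <-] xi xj.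
case: (ltngtP i j) => [ij|ji|-> //].
- by have := disjointFr (hdis i j hi hj ij) xi; rewrite xj.
- by have := disjointFr (hdis j i hj hi ji) xj; rewrite xi.
Qed.

Lemma path_edge_index x y : path_edge P x y ->
  exists2 p, p \in P & [/\ x \in p, y \in p & index y p = (index x p).+1].
Proof.
case/hasP => p pP /(zip_beheadP x)[i hi [<- <-]]; exists p => //.
by rewrite !mem_nth ?(index_uniq _ _ (linkage_uniq pP)) //; lia.
Qed.

Lemma path_edge_of_index p x : p \in P -> x \in p -> (index x p).+1 < size p ->
  path_edge P x (nth x p (index x p).+1).
Proof.
move=> pP xp hi; apply/hasP; exists p => //.
by apply/(zip_beheadP x); exists (index x p); rewrite ?nth_index.
Qed.

Lemma path_edge_edge x y : path_edge P x y -> [&& e x y, x \in V & y \in V].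
Proof.
case/hasP => p pP /(zip_beheadP x)[i hi [hx hy]].
rewrite -hx -hy linkage_nth_edge // !(linkage_sub pP) ?mem_nth //; lia.
Qed.

Lemma path_edge_functional x y y' : path_edge P x y -> path_edge P x y' -> y = y'.
Proof.
case/path_edge_index => p pP [xp yp iy] /path_edge_index[q qP [xq yq iy']].
have epq := linkage_same_path pP qP xp xq; subst q.
by rewrite -(nth_index x yp) -(nth_index x yq) iy iy'.
Qed.

Lemma path_edge_injective x x' y : path_edge P x y -> path_edge P x' y -> x = x'.
Proof.
case/path_edge_index => p pP [xp yp iy] /path_edge_index[q qP [xq yq iy']].
have epq := linkage_same_path pP qP yp yq; subst q.
by apply: (index_inj x xp xq); apply: succn_inj; rewrite -iy -iy'.
Qed.

Lemma path_edge_asym x y : path_edge P x y -> path_edge P y x -> False.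
Proof.
case/path_edge_index => p pP [xp yp iy] /path_edge_index[q qP [yq xq ix]].
have epq := linkage_same_path pP qP xp xq; subst q; lia.
Qed.

Lemma path_edge_to_head p x x0 : p \in P -> path_edge P x (head x0 p) -> False.
Proof.
move=> pP /path_edge_index[q qP [_ hq]].
rewrite (linkage_same_path qP pP hq (linkage_head_mem x0 pP)).
by case: p pP {hq} => //= a p _; rewrite eqxx.
Qed.

Lemma path_edge_succ p x : p \in P -> x \in p -> x \notin Tt -> exists y, path_edge P x y.
Proof.
move=> pP xp xT; suff hi : (index x p).+1 < size p.
  by exists (nth x p (index x p).+1); apply: path_edge_of_index.
rewrite ltnNge; apply: contra xT => hle.
have hx : (index x p).+1 = size p by apply/eqP; rewrite eqn_leq hle andbT index_mem.
by rewrite -(nth_index x xp) -[index x p]/((index x p).+1.-1) hx nth_last linkage_last.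
Qed.

Lemma path_edge_continues x y : path_edge P y x -> x \notin Tt -> exists z, path_edge P x z.
Proof. by case/path_edge_index => p pP [_ xp _]; exact: path_edge_succ pP xp. Qed.

Lemma path_edge_from_head p x0 : [disjoint S & Tt] -> p \in P ->
  exists y, path_edge P (head x0 p) y.
Proof.
move=> hST pP; apply: (path_edge_succ pP (linkage_head_mem x0 pP)).
by rewrite (disjointFr hST (linkage_head x0 pP)).
Qed.

Lemma uniq_map_head x0 : uniq (map (head x0) P).
Proof.
case: hP => _ _ hdis; rewrite uniq_pairwise pairwise_map.
apply: sub_in_pairwise hdis; last exact: allss.
move=> p q pP qP /= /disjointFr dpq; apply/eqP => hpq.
by have := dpq _ (linkage_head_mem x0 pP); rewrite hpq linkage_head_mem.
Qed.

Lemma linkage_unique_nbr p x : symmetric e -> p \in P -> x \in p ->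
  unique_nbr e x -> x \in S :|: Tt.
Proof.
move=> esym pP xp hdeg; apply: contraT; rewrite in_setU negb_or => /andP[xS xT].
have [i hi] : exists i, index x p = i.+1.
  case hx: (index x p) => [|i]; last by exists i.
  by move: xS; rewrite -(nth_index x xp) hx nth0 linkage_head.
have hin : path_edge P (nth x p i) x.
  apply/hasP; exists p => //; apply/(zip_beheadP x); exists i.
    by rewrite -hi index_mem.
  by rewrite -hi nth_index.
have [y hout] := path_edge_succ pP xp xT.
case/and3P: (path_edge_edge hin) => hwx _ _; case/and3P: (path_edge_edge hout) => hxy _ _.
rewrite esym in hwx.
by case: (path_edge_asym hin); rewrite (hdeg _ _ hwx hxy).
Qed.

End Linkage.

Section EdgeOperations.
Variable T : finType.
Implicit Types (V : {set T}) (e : rel T) (p s l r : seq T) (u v x y : T).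

Lemma gpathE V e p :
  gpath V e p = [&& p != [::], sorted e p, uniq p & all (fun z => z \in V) p].
Proof. by case: p. Qed.

Lemma gpath_rev V e p : symmetric e -> gpath V e (rev p) = gpath V e p.
Proof.
move=> es; rewrite !gpathE rev_uniq all_rev rev_sorted -size_eq0 size_rev size_eq0.
by rewrite (@eq_sorted _ _ e) // => x y; rewrite es.
Qed.

Lemma contr_edge_sym e u v : symmetric e -> symmetric (contr_edge e u v).
Proof.
move=> es x y; rewrite /contr_edge [y == x]eq_sym (es y x) (es v x) (es y v).
by case: (x != v); case: (y != v); case: (x != y) => //=; case: (e x y) => //=;
  rewrite orbC.
Qed.

Lemma sorted_contr_edge e u v s : irreflexive e -> v \notin s ->
  sorted e s -> sorted (contr_edge e u v) s.
Proof.
move=> ei vs; apply: (sub_in_sorted (P := predC1 v)).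
  move=> x y; rewrite !unfold_in /= => xv yv exy; rewrite /contr_edge xv yv exy /= andbT.
  by apply: contraTneq exy => ->; rewrite ei.
by apply/allP => z zs; apply: contraNneq vs => <-.
Qed.

Lemma filter_predC1_id v s : v \notin s -> filter (predC1 v) s = s.
Proof. by move=> vs; apply/all_filterP/allP => z zs; apply: contraNneq vs => <-. Qed.

Lemma gpath_contr_notin V e u v p : irreflexive e -> gpath V e p -> v \notin p ->
  gpath (V :\ v) (contr_edge e u v) p.
Proof.
move=> ei; rewrite !gpathE => /and4P[-> so -> al] vp /=.
rewrite sorted_contr_edge //; apply/allP => z zp; rewrite !inE (allP al z zp) andbT.
by apply: contraNneq vp => <-.
Qed.

Lemma gpath_contr_cat V e u v l r : irreflexive e -> gpath V e (l ++ u :: v :: r) ->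
  gpath (V :\ v) (contr_edge e u v) (filter (predC1 v) (l ++ u :: v :: r)).
Proof.
move=> ei g; move: (g); rewrite gpathE => /and4P[_ so un al].
have [vl vr uv uc] : [/\ v \notin l, v \notin r, u != v & u \notin r].
  move: un; rewrite cat_uniq /= !inE !negb_or => /and3P[_ hl /and3P[/andP[-> ->] -> _]].
  by case/and3P: hl.
have hf : filter (predC1 v) (l ++ u :: v :: r) = l ++ u :: r.
  by rewrite filter_cat /= uv eqxx /= !filter_predC1_id.
rewrite gpathE filter_uniq // hf /=; apply/and3P; split.
- by case: (l).
- move: so; rewrite !sorted_cat_cons => /andP[sl sr]; apply/andP; split.
    by apply: (sorted_contr_edge _ ei _ sl); rewrite mem_rcons inE negb_or eq_sym uv.
  case: r vr uc sr {al un hf g} => //= c r.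
  rewrite !inE !negb_or => /andP[vc vr] /andP[uc ur] /and3P[_ evc pr].
  rewrite /contr_edge uv eq_sym vc uc eqxx evc orbT /=.
  have vcr : v \notin c :: r by rewrite inE negb_or vc.
  exact: (sorted_contr_edge u ei vcr pr).
- apply/allP => z; rewrite -hf mem_filter => /andP[/= zv zp].
  by rewrite !inE zv (allP al z zp).
Qed.

Lemma gpath_contr V e u v p : symmetric e -> irreflexive e -> gpath V e p ->
  ((u, v) \in zip p (behead p)) || ((v, u) \in zip p (behead p)) ->
  gpath (V :\ v) (contr_edge e u v) (filter (predC1 v) p).
Proof.
move=> es ei g /orP[] /zip_behead_cat[l [r def_p]]; subst p.
  exact: gpath_contr_cat.
have er : rev (l ++ v :: u :: r) = rev r ++ u :: v :: rev l.
  by rewrite rev_cat !rev_cons -!cats1 -!catA.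
rewrite -(gpath_rev _ _ (contr_edge_sym u v es)) -filter_rev er.
by apply: gpath_contr_cat => //; move: g; rewrite -(gpath_rev _ _ es) er.
Qed.

Lemma last_v_rcons s x : last_v (rcons s x) = Some x.
Proof. by case: s => //= y s; rewrite last_rcons. Qed.

Lemma first_v_filter v p x : first_v p = Some x -> x != v ->
  first_v (filter (predC1 v) p) = Some x.
Proof. by case: p => //= a p [<-] av; rewrite av. Qed.

Lemma last_v_filter v p x : last_v p = Some x -> x != v ->
  last_v (filter (predC1 v) p) = Some x.
Proof.
by case/lastP: p => // p a; rewrite last_v_rcons => -[<-] av;
  rewrite filter_rcons /= av last_v_rcons.
Qed.

Lemma linkage_contr V e k S Tt P u v : symmetric e -> irreflexive e ->
  linkage V e k S Tt P -> path_edge P u v || path_edge P v u ->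
  v \notin S -> v \notin Tt ->
  linkage (V :\ v) (contr_edge e u v) k S Tt (map (filter (predC1 v)) P).
Proof.
move=> es ei hP huv vS vT.
have [q qP hq] : exists2 q, q \in P &
    ((u, v) \in zip q (behead q)) || ((v, u) \in zip q (behead q)).
  by case/orP: huv => /hasP[q qP h]; exists q; rewrite ?h ?orbT.
have vq : v \in q by case/orP: hq => /mem_zip_behead/andP[].
case: (hP) => sz hp hdis; split.
- by rewrite size_map.
- move=> _ /mapP[p pP ->]; have [g [s fs sS] [t lt tT]] := hp p pP; split.
  + case vp: (v \in p).
      by rewrite (linkage_same_path hP pP qP vp vq) gpath_contr ?(linkage_gpath hP).
    by rewrite filter_predC1_id ?vp //; apply: gpath_contr_notin; rewrite ?vp.
  + by exists s; rewrite // (first_v_filter fs) //; apply: contraNneq vS => <-.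
  + by exists t; rewrite // (last_v_filter lt) //; apply: contraNneq vT => <-.
- rewrite pairwise_map; apply: sub_pairwise hdis => p1 p2 /=.
  by apply: disjointW; apply/subsetP => z; rewrite mem_filter => /andP[].
Qed.

Lemma linkage_del_edge V e k S Tt P u v : linkage V e k S Tt P ->
  ~~ (path_edge P u v || path_edge P v u) -> linkage V (del_edge e u v) k S Tt P.
Proof.
move=> hP huv; case: (hP) => sz hp hdis; split => // p pP.
have [g hs ht] := hp p pP; split => //.
case: p pP g {hs ht} => // a q pP /and3P[pq uq aq]; apply/and3P; split => //.
apply/(pathP a) => i hi; rewrite /del_edge (pathP a pq i hi) /=.
have he : path_edge P (nth a (a :: q) i) (nth a q i).
  by apply/hasP; exists (a :: q) => //; apply/(zip_beheadP a); exists i.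
by apply: contra huv => /orP[] /andP[/eqP hu /eqP hv]; rewrite -hu -hv he ?orbT.
Qed.

End EdgeOperations.

Section RelationWalk.
Variables (T : finType) (f : rel T).
Hypothesis f_inj : forall x x' y, f x y -> f x' y -> x = x'.
Implicit Types (x y s : T) (w : seq T).

Definition rel_succ x : option T := [pick y | f x y].

Fixpoint rel_walk n x : seq T :=
  if n is n'.+1 then x :: (if rel_succ x is Some y then rel_walk n' y else [::])
  else [::].

Lemma rel_walk_sorted n x : sorted f (rel_walk n x).
Proof.
elim: n x => // n IH x /=; rewrite /rel_succ; case: pickP => [y fxy|] //=.
by move: (IH y); case: n {IH} => //= n; case: (rel_succ y) => [z|] /=; rewrite fxy.
Qed.

Lemma rel_walk_stuck n x : size (rel_walk n x) < n ->
  forall z, ~~ f (last x (rel_walk n x)) z.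
Proof.
elim: n x => // n IH x /=; rewrite /rel_succ; case: pickP => [y fxy|nf] /=.
  by case: n IH => // n IH; rewrite ltnS => /IH.
by move=> _ z; rewrite nf.
Qed.

Lemma sorted_source_nth_eq x0 w w' i j : sorted f w -> sorted f w' ->
  (forall x, ~~ f x (head x0 w)) -> (forall x, ~~ f x (head x0 w')) ->
  i < size w -> j < size w' -> nth x0 w i = nth x0 w' j ->
  head x0 w = head x0 w' /\ i = j.
Proof.
case: w w' => [|a w] [|a' w'] //= sw sw' na na'.
have step v b n : path f b v -> n < size v -> f (nth x0 (b :: v) n) (nth x0 v n).
  by move=> /(pathP x0) h /h.
elim: i j => [|i IH] [|j] hi hj //= eq.
- by have := step _ _ _ sw' hj; rewrite -eq (negbTE (na _)).
- by have := step _ _ _ sw hi; rewrite eq (negbTE (na' _)).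
- have h1 := step _ _ _ sw hi; rewrite eq in h1.
  by case/(IH j (ltnW hi) (ltnW hj)): (f_inj h1 (step _ _ _ sw' hj)) => -> ->.
Qed.

Lemma rel_walk_uniq n s : (forall x, ~~ f x s) -> uniq (rel_walk n s).
Proof.
case: n => [//|n] ns; apply/(uniqP s) => i j hi hj eq.
by case: (@sorted_source_nth_eq s (rel_walk n.+1 s) (rel_walk n.+1 s) i j
  (rel_walk_sorted _ _) (rel_walk_sorted _ _) ns ns hi hj eq).
Qed.

Lemma rel_walk_disjoint n s s' : (forall x, ~~ f x s) -> (forall x, ~~ f x s') ->
  s != s' -> [disjoint rel_walk n.+1 s & rel_walk n.+1 s'].
Proof.
move=> ns ns' ss'; rewrite disjoint_has; apply/hasPn => z /(nthP s)[i hi <-].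
apply/negP => /(nthP s)[j hj /esym eq].
by case: (@sorted_source_nth_eq s (rel_walk n.+1 s) (rel_walk n.+1 s') i j
  (rel_walk_sorted _ _) (rel_walk_sorted _ _) ns ns' hi hj eq) => /eqP; rewrite (negbTE ss').
Qed.

Variables (V : {set T}) (e : rel T) (Tt : {set T}).
Hypothesis f_edge : forall x y, f x y -> [&& e x y, x \in V & y \in V].
Hypothesis f_cont : forall x y, x \notin Tt -> f y x -> exists z, f x z.

Lemma rel_walk_path s y : (forall x, ~~ f x s) -> f s y ->
  let w := rel_walk #|T|.+1 s in
  [/\ gpath V e w, first_v w = Some s & exists2 t, last_v w = Some t & t \in Tt].
Proof.
move=> ns fsy w.
have stuck : forall z, ~~ f (last s w) z.
  apply: rel_walk_stuck; rewrite ltnS -(card_uniqP (rel_walk_uniq _ ns)).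
  exact: max_card.
have [q' [t def_w]] : exists q' t, w = s :: rcons q' t.
  rewrite /w /= /rel_succ; case: pickP => [y' _|/(_ y)]; last by rewrite fsy.
  have : 0 < #|T| by apply/card_gt0P; exists y.
  case: #|T| => // n _ /=; set q := (if _ is Some _ then _ else _).
  by exists (belast y' q), (last y' q); rewrite -lastI.
have sw := rel_walk_sorted #|T|.+1 s; have uw := rel_walk_uniq #|T|.+1 ns.
rewrite -/w def_w in sw uw stuck *; split => //.
- rewrite /gpath uw /=; apply/andP; split.
    by apply: sub_path sw => a b /f_edge/andP[].
  apply/andP; split.
    by have := (pathP s sw) 0 (_ : 0 < _); rewrite size_rcons => /(_ isT)/f_edge/and3P[].
  by apply/(all_nthP s) => i hi; have := (pathP s sw) i hi; case/f_edge/and3P.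
- exists t; first by rewrite /= last_rcons.
  have hpred : f (last s q') t by move: sw; rewrite /= rcons_path => /andP[].
  apply: contraT => hT; have [z fz] := f_cont hT hpred.
  by have := stuck z; rewrite /= last_rcons fz.
Qed.

Lemma rel_routable k (S : {set T}) (ss : seq T) :
  size ss = k -> uniq ss -> {subset ss <= S} ->
  (forall s, s \in ss -> (forall x, ~~ f x s) /\ exists y, f s y) ->
  routable V e k S Tt.
Proof.
move=> sz uss sS hsrc; exists (map (rel_walk #|T|.+1) ss); split.
- by rewrite size_map.
- move=> _ /mapP[s hs ->]; have [ns [y fsy]] := hsrc s hs.
  have [g -> lt] := rel_walk_path ns fsy; split => //; exists s => //; exact: sS.
- rewrite pairwise_map; move: uss; rewrite uniq_pairwise.
  apply: sub_in_pairwise; last exact: allss.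
  move=> s s' hs hs' /= ss'.
  exact: rel_walk_disjoint (proj1 (hsrc s hs)) (proj1 (hsrc s' hs')) ss'.
Qed.

End RelationWalk.

Lemma first_repeat (T : eqType) (x0 : T) (w : seq T) : ~~ uniq w ->
  exists i j, [/\ i < j, j < size w, nth x0 w i = nth x0 w j & uniq (take j w)].
Proof.
move=> nu; pose rep j := (j < size w) && (nth x0 w j \in take j w).
have ex : exists j, rep j.
  case/(uniqPn x0): nu => i [j [ij jw eq]]; exists j; rewrite /rep jw -eq /=.
  by apply/(nthP x0); exists i; rewrite ?nth_take // size_take jw.
case: (ex_minnP ex) => j /andP[jw jin] jmin.
have ij : index (nth x0 w j) (take j w) < j by move: jin; rewrite -index_mem size_take jw.
exists (index (nth x0 w j) (take j w)), j; split => //.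
  by rewrite -(nth_take x0 ij) nth_index.
apply: contraT => /(uniqPn x0)[a [b [ab]]]; rewrite size_take jw => bj.
rewrite !nth_take ?(ltn_trans ab bj) // => eq.
have : rep b.
  rewrite /rep (ltn_trans bj jw) -eq; apply/(nthP x0); exists a.
    by rewrite size_take (ltn_trans bj jw).
  by rewrite nth_take.
by move/jmin; rewrite leqNgt bj.
Qed.

Section AltCycle.
Variable T : finType.

(* The closed walk [ys_0 ... ys_(r-1) ys_0] alternates P- and Q-edges, starting
   with a P-edge; for odd [r] its last and first edges are both P-edges. *)
Definition alt_cycle (P Q : seq (seq T)) (x0 : T) (ys : seq T) : Prop :=
  forall t, t < size ys ->
    (if odd t then path_edge Q else path_edge P)
      (nth x0 ys t) (nth x0 ys (if t.+1 == size ys then 0 else t.+1)).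

Lemma chain_alt_cycle R B c x xs : chain R B c x xs -> ~~ uniq (x :: xs) ->
  exists2 ys, uniq ys /\ 0 < size ys & alt_cycle R B x ys \/ alt_cycle B R x ys.
Proof.
move=> hc /(first_repeat x)[i [j [ij jw eq uw]]].
set w := x :: xs in jw eq uw.
have sz : size (drop i (take j w)) = j - i by rewrite size_drop size_take jw.
have ny t : t < j - i -> nth x (drop i (take j w)) t = nth x w (i + t).
  by move=> ht; rewrite nth_drop nth_take //; lia.
have hcyc t : t < j - i -> col_edge R B (c (+) odd i (+) odd t)
    (nth x (drop i (take j w)) t)
    (nth x (drop i (take j w)) (if t.+1 == j - i then 0 else t.+1)).
  move=> ht; have hxs : i + t < size xs.
    by move: jw; rewrite /w /= ltnS => /(leq_trans _); apply; lia.
  have -> : nth x (drop i (take j w)) (if t.+1 == j - i then 0 else t.+1)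
      = nth x xs (i + t).
    case: ifP => /eqP ht'; rewrite ny; try lia.
      by rewrite addn0 eq (_ : j = (i + t).+1) //; lia.
    by rewrite addnS.
  by rewrite ny // -addbA -oddD; apply: hc.
exists (drop i (take j w)); first by rewrite drop_uniq // sz; split => //; lia.
case d: (c (+) odd i); [left|right] => t; rewrite sz => ht;
  by have := hcyc t ht; rewrite d /col_edge; case: (odd t).
Qed.

End AltCycle.

Section Reroute.
Variables (T : finType) (V : {set T}) (e : rel T) (k : nat).
Variables (SP TP SQ TQ : {set T}) (P Q : seq (seq T)).
Hypothesis hP : linkage V e k SP TP P.
Hypothesis hQ : linkage V e k SQ TQ Q.
Hypothesis hSTP : [disjoint SP & TP].
Hypothesis esym : symmetric e.
Hypothesis hdeg : forall x, x \in SP :|: TP -> unique_nbr e x.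
Hypothesis hnd : edge_disjoint P Q.

Variables (a0 : T) (ys : seq T).
Hypothesis ys_uniq : uniq ys.
Hypothesis ys_size : 2 < size ys.
Hypothesis ys_alt : alt_cycle P Q a0 ys.

Let r := size ys.
Let y t := nth a0 ys t.
Let nx t := if t.+1 == r then 0 else t.+1.
Let pv t := if t is t'.+1 then t' else r.-1.

Lemma nx_lt t : t < r -> nx t < r.
Proof. rewrite /nx; case: ifP => /eqP; lia. Qed.
Lemma pv_lt t : t < r -> pv t < r.
Proof. rewrite /pv; case: t => /=; lia. Qed.
Lemma nx_pv t : t < r -> nx (pv t) = t.
Proof. rewrite /nx /pv; case: t => [|t] /=; case: ifP => /eqP; lia. Qed.
Lemma nx_neq_pv t : t < r -> nx t <> pv t.
Proof. rewrite /nx /pv; case: ifP => /eqP; case: t => [|t] /=; lia. Qed.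

Lemma odd_pv t : t < r -> odd (pv t) -> ~~ odd t.
Proof. by case: t => [|t] //= _ ->. Qed.

Lemma y_inj t t' : t < r -> t' < r -> y t = y t' -> t = t'.
Proof. by move=> ht ht' /eqP; rewrite /y nth_uniq // => /eqP. Qed.

Lemma on_cycle x : x \in ys -> exists2 t, t < r & x = y t.
Proof. by move=> xs; exists (index x ys); rewrite ?index_mem // /y nth_index. Qed.

Lemma alt_P t : t < r -> ~~ odd t -> path_edge P (y t) (y (nx t)).
Proof. by move=> ht /negbTE ot; have := ys_alt ht; rewrite ot. Qed.
Lemma alt_Q t : t < r -> odd t -> path_edge Q (y t) (y (nx t)).
Proof. by move=> ht ot; have := ys_alt ht; rewrite ot. Qed.

Lemma cycle_adj t : t < r -> e (y t) (y (nx t)).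
Proof.
move=> ht; case ot: (odd t).
  by case/and3P: (path_edge_edge hQ (alt_Q ht ot)).
by case/and3P: (path_edge_edge hP (alt_P ht (negbT ot))).
Qed.

Lemma cycle_nonterminal t : t < r -> y t \notin SP :|: TP.
Proof.
move=> ht; apply/negP => hT.
have e1 := cycle_adj ht; have e2 := cycle_adj (pv_lt ht); rewrite nx_pv // esym in e2.
exact: (nx_neq_pv ht (y_inj (nx_lt ht) (pv_lt ht) (hdeg hT e1 e2))).
Qed.

Definition cycP a b := has (fun t => [&& ~~ odd t, y t == a & y (nx t) == b]) (iota 0 r).
Definition cycQ a b := has (fun t => [&& odd t, y t == a & y (nx t) == b]) (iota 0 r).

Lemma cycPP a b : reflect (exists2 t, t < r & [/\ ~~ odd t, a = y t & b = y (nx t)]) (cycP a b).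
Proof.
apply: (iffP hasP) => [[t]|[t ht [ot -> ->]]].
  by rewrite mem_iota add0n => /andP[_ ht] /and3P[ot /eqP <- /eqP <-]; exists t.
by exists t; rewrite ?mem_iota ?ot ?eqxx.
Qed.

Lemma cycQP a b : reflect (exists2 t, t < r & [/\ odd t, a = y t & b = y (nx t)]) (cycQ a b).
Proof.
apply: (iffP hasP) => [[t]|[t ht [ot -> ->]]].
  by rewrite mem_iota add0n => /andP[_ ht] /and3P[ot /eqP <- /eqP <-]; exists t.
by exists t; rewrite ?mem_iota ?ot ?eqxx.
Qed.

(* Follow the P-edges off the cycle and the Q-edges of the cycle backwards;
   this never uses the P-edge [y 0 -> y 1]. *)
Definition reroute_rel a b := (path_edge P a b && ~~ cycP a b) || (path_edge Q b a && cycQ b a).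

Lemma cycQ_pred a b c : path_edge P a b -> cycQ b c -> cycP a b.
Proof.
move=> pab /cycQP[s hs [os eb _]]; rewrite eb in pab *.
have eps : ~~ odd (pv s) by apply: contraL os; apply: odd_pv.
have := alt_P (pv_lt hs) eps; rewrite nx_pv // => /(path_edge_injective hP pab) ->.
by apply/cycPP; exists (pv s); rewrite ?pv_lt ?nx_pv.
Qed.

Lemma reroute_rel_inj a a' b : reroute_rel a b -> reroute_rel a' b -> a = a'.
Proof.
case/orP => /andP[h1 h2] /orP[] /andP[h3 h4].
- exact (path_edge_injective hP h1 h3).
- by rewrite (cycQ_pred h1 h4) in h2.
- by rewrite (cycQ_pred h3 h2) in h4.
- exact (path_edge_functional hQ h1 h3).
Qed.

Lemma reroute_rel_edge x z : reroute_rel x z ->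
  [&& del_edge e (y 0) (y 1) x z, x \in V & z \in V].
Proof.
have nx0 : nx 0 = 1 by rewrite /nx; case: ifP => /eqP; lia.
have E0 : path_edge P (y 0) (y 1) by rewrite -nx0; apply: alt_P; lia.
rewrite /del_edge; case/orP => /andP[h1 h2].
- have /and3P[-> -> ->] := path_edge_edge hP h1; rewrite /= !andbT.
  apply/negP => /orP[] /andP[/eqP ex /eqP ez]; subst x z.
    by move/negP: h2; apply; apply/cycPP; exists 0; rewrite ?nx0 //; lia.
  exact (path_edge_asym hP h1 E0).
- have /and3P[ezx -> ->] := path_edge_edge hQ h1; rewrite esym ezx /= !andbT.
  apply: contra (hnd (y 0) (y 1)) => /orP[] /andP[/eqP ex /eqP ez];
    by rewrite ex ez in h1; rewrite E0 h1 ?orbT.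
Qed.

Lemma reroute_rel_source p : p \in P ->
  (forall x, ~~ reroute_rel x (head a0 p)) /\ exists z, reroute_rel (head a0 p) z.
Proof.
move=> pP; have hS : head a0 p \in SP :|: TP by rewrite inE (linkage_head hP a0 pP).
have off_cycle t : t < r -> head a0 p <> y t.
  by move=> ht eh; move: (cycle_nonterminal ht); rewrite -eh hS.
split.
  move=> x; apply/negP => /orP[] /andP[h1 h2]; first by case: (path_edge_to_head hP pP h1).
  by case/cycQP: h2 => t ht [_ /off_cycle].
have [z hz] := path_edge_from_head hP a0 hSTP pP; exists z; rewrite /reroute_rel hz /=.
by apply/orP; left; apply/cycPP => -[t ht [_ /off_cycle]].
Qed.

Lemma reroute_rel_cont x w : x \notin TP -> reroute_rel w x -> exists z, reroute_rel x z.
Proof.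
move=> xT; case/orP => /andP[h1 h2].
- case: (boolP (x \in ys)) => [/on_cycle[t ht ext]|xs].
    case ot: (odd (pv t)); last first.
      have := alt_P (pv_lt ht) (negbT ot); rewrite nx_pv // -ext.
      move=> /(path_edge_injective hP h1) ew.
      by move/negP: h2; case; apply/cycPP; exists (pv t); rewrite ?pv_lt ?nx_pv ?ot.
    have hq := alt_Q (pv_lt ht) ot; rewrite nx_pv // in hq.
    exists (y (pv t)); rewrite /reroute_rel ext hq /=; apply/orP; right.
    by apply/cycQP; exists (pv t); rewrite ?pv_lt ?nx_pv.
  have [z hz] := path_edge_continues hP h1 xT; exists z; rewrite /reroute_rel hz /=.
  apply/orP; left; apply: contra xs => /cycPP[t ht [_ -> _]]; exact: mem_nth.
- case/cycQP: h2 => s hs [os ex ew].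
  have eps : ~~ odd (pv s) by apply: contraL os; apply: odd_pv.
  have := alt_P (pv_lt hs) eps; rewrite nx_pv // -ex => hpx.
  have [z hz] := path_edge_continues hP hpx xT; exists z; rewrite /reroute_rel hz /=.
  apply/orP; left; apply/negP => /cycPP[t ht [ot ex' _]].
  by rewrite ex in ex'; move: os; rewrite (y_inj hs ht ex') (negbTE ot).
Qed.

Lemma reroute : routable V (del_edge e (nth a0 ys 0) (nth a0 ys 1)) k SP TP.
Proof.
apply: (@rel_routable _ _ reroute_rel_inj _ _ _ reroute_rel_edge reroute_rel_cont
  _ _ (map (head a0) P)).
- by rewrite size_map; case: hP.
- exact: uniq_map_head hP a0.
- by move=> _ /mapP[p pP ->]; exact (linkage_head hP a0 pP).
- by move=> _ /mapP[p pP ->]; apply: reroute_rel_source.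
Qed.

End Reroute.

Lemma no_alt_cycle (T : finType) (V : {set T}) (e : rel T) k (SP TP SQ TQ : {set T})
    (P Q : seq (seq T)) (a0 : T) (ys : seq T) :
  linkage V e k SP TP P -> linkage V e k SQ TQ Q -> [disjoint SP & TP] ->
  symmetric e -> irreflexive e ->
  (forall x, x \in SP :|: TP -> unique_nbr e x) -> edge_disjoint P Q ->
  (forall u v, u \in V -> v \in V -> e u v ->
    ~ (routable V (del_edge e u v) k SP TP /\ routable V (del_edge e u v) k SQ TQ)) ->
  uniq ys -> 0 < size ys -> ~ alt_cycle P Q a0 ys.
Proof.
move=> hP hQ hST esym eirr hdeg hnd hmin uy sy halt.
have E0 := halt 0 sy; rewrite /= in E0.
case: (ltnP 2 (size ys)) => [s3|s2].
  have /and3P[e01 v0 v1] := path_edge_edge hP E0.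
  rewrite (_ : (if 1 == size ys then 0 else 1) = 1) in E0 e01 v0 v1;
    last by case: ifP => /eqP; lia.
  apply: (hmin _ _ v0 v1 e01); split.
    exact (reroute hP hQ hST esym hdeg hnd uy s3 halt).
  exists Q; apply: linkage_del_edge => //.
  by move: (hnd (nth a0 ys 0) (nth a0 ys 1)); rewrite E0.
have [s1|{}s2] : size ys = 1 \/ size ys = 2 by lia.
  by move: E0; rewrite s1 => /(path_edge_edge hP); rewrite eirr.
have E1 : path_edge Q (nth a0 ys 1) (nth a0 ys 0) by move: (halt 1); rewrite s2 => /(_ isT).
rewrite s2 /= in E0.
by move: (hnd (nth a0 ys 0) (nth a0 ys 1)); rewrite E0 E1 ?orbT.
Qed.

Lemma minor_singleton_unique_nbr (T : finType) (eG eH : rel T) (VH : {set T})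
    (phi : T -> {set T}) (z : T) :
  minor_model eG VH eH phi -> (forall x y, eH x y -> (x \in VH) && (y \in VH)) ->
  z \in VH -> phi z = [set z] -> degree [set: T] eG z = 1 ->
  unique_nbr eH z.
Proof.
case=> _ _ hdisj hedge hVH zV phz hdeg a b ea eb.
have [w hw] : exists w, [set y in [set: T] | eG z y] = [set w] by apply/cards1P/eqP.
have nbr c : eH z c -> c \in VH /\ w \in phi c.
  move=> ec; have /andP[_ cV] := hVH _ _ ec.
  have [z' [c' [z'z c'c ez]]] := hedge z c zV cV ec.
  rewrite phz in_set1 in z'z; rewrite (eqP z'z) in ez.
  have : c' \in [set y in [set: T] | eG z y] by rewrite !inE ez.
  by rewrite hw in_set1 => /eqP <-.
have [aV wa] := nbr a ea; have [bV wb] := nbr b eb.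
case: (eqVneq a b) => // nab.
by have := disjointFr (hdisj a b aV bV nab) wa; rewrite wb.
Qed.

Lemma disjoint_setU2 (T : finType) (A B C D : {set T}) :
  [disjoint A & C] -> [disjoint A & D] -> [disjoint B & C] -> [disjoint B & D] ->
  [disjoint A :|: B & C :|: D].
Proof.
by rewrite -!setI_eq0 setIUl !setIUr => /eqP-> /eqP-> /eqP-> /eqP->; rewrite !setU0.
Qed.

Lemma no_common_edge (T : finType) (V : {set T}) (e : rel T) k (S1 T1 S2 T2 : {set T})
    (R B : seq (seq T)) :
  symmetric e -> irreflexive e ->
  linkage V e k S1 T1 R -> linkage V e k S2 T2 B -> [disjoint S1 :|: T1 & S2 :|: T2] ->
  (forall z, z \in S1 :|: T1 :|: S2 :|: T2 -> unique_nbr e z) ->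
  (forall u v, u \in V -> v \in V -> e u v ->
     u \in S1 :|: T1 :|: S2 :|: T2 \/ v \in S1 :|: T1 :|: S2 :|: T2 \/
     ~ (routable (V :\ v) (contr_edge e u v) k S1 T1 /\
        routable (V :\ v) (contr_edge e u v) k S2 T2)) ->
  edge_disjoint R B.
Proof.
move=> esym eirr hR hB hsep hdeg hcon u v; apply/negP => /andP[hr hb].
have inner z : (exists2 p, p \in R & z \in p) -> (exists2 q, q \in B & z \in q) ->
    z \notin S1 :|: T1 :|: S2 :|: T2.
  move=> [p pR zp] [q qB zq]; apply/negP => zt.
  have z1 := linkage_unique_nbr hR esym pR zp (hdeg z zt).
  have z2 := linkage_unique_nbr hB esym qB zq (hdeg z zt).
  by rewrite (disjointFr hsep z1) in z2.
have on_path (P : seq (seq T)) (a b : T) : path_edge P a b || path_edge P b a ->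
    (exists2 p, p \in P & a \in p) /\ (exists2 p, p \in P & b \in p).
  by case/orP => /hasP[p pP /mem_zip_behead/andP[ha hb']]; split; exists p.
have [hur hvr] := on_path _ _ _ hr; have [hub hvb] := on_path _ _ _ hb.
have nu := inner u hur hub; have nv := inner v hvr hvb.
have /and3P[euv uV vV] : [&& e u v, u \in V & v \in V].
  case/orP: hr => /(path_edge_edge hR)/and3P[h1 h2 h3]; first by rewrite h1 h2 h3.
  by rewrite esym h1 h2 h3.
case: (hcon u v uV vV euv) => [ut|[vt|]]; [by rewrite ut in nu|by rewrite vt in nv|apply].
move: nv; rewrite !inE !negb_or => /andP[/andP[/andP[nS1 nT1] nS2] nT2].
by split; [exists (map (filter (predC1 v)) R)|exists (map (filter (predC1 v)) B)];
  apply: linkage_contr.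
Qed.

Theorem claim2p4 (TG : finType) (eG : rel TG) (k : nat)
    (S1 T1 S2 T2 : {set TG})
    (VH : {set TG}) (eH : rel TG) (phi : TG -> {set TG})
    (R B : seq (seq TG)) :
  sym_irrefl eG ->
  #|S1| = k -> #|T1| = k -> #|S2| = k -> #|T2| = k ->
  [disjoint S1 & T1] -> [disjoint S1 & S2] -> [disjoint S1 & T2] ->
  [disjoint T1 & S2] -> [disjoint T1 & T2] -> [disjoint S2 & T2] ->
  (forall x, x \in S1 :|: T1 :|: S2 :|: T2 -> degree [set: TG] eG x = 1) ->
  routable [set: TG] eG k S1 T1 -> routable [set: TG] eG k S2 T2 ->
  (* H = (VH, eH) is a minor of G containing the terminals as vertices,
     each with singleton branch set *)
  sym_irrefl eH ->
  (forall x y, eH x y -> (x \in VH) && (y \in VH)) ->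
  minor_model eG VH eH phi ->
  (forall x, x \in S1 :|: T1 :|: S2 :|: T2 -> x \in VH /\ phi x = [set x]) ->
  routable VH eH k S1 T1 -> routable VH eH k S2 T2 ->
  (* minimality: deleting or contracting any edge destroys a property *)
  (forall u v, u \in VH -> v \in VH -> eH u v ->
     ~ (routable VH (del_edge eH u v) k S1 T1 /\
        routable VH (del_edge eH u v) k S2 T2)) ->
  (forall u v, u \in VH -> v \in VH -> eH u v ->
     u \in S1 :|: T1 :|: S2 :|: T2 \/ v \in S1 :|: T1 :|: S2 :|: T2 \/
     ~ (routable (VH :\ v) (contr_edge eH u v) k S1 T1 /\
        routable (VH :\ v) (contr_edge eH u v) k S2 T2)) ->
  linkage VH eH k S1 T1 R -> linkage VH eH k S2 T2 B ->
  forall (c : bool) (x : TG) (xs : seq TG),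
    chain R B c x xs -> uniq (x :: xs).
Proof.
move=> _ _ _ _ _ d11 d12 d13 d21 d22 d23 hdegG _ _ [esym eirr] hVH hmm hsing _ _
  hdel hcon hR hB c x xs hc.
apply/negPn/negP => nu.
have hdeg z : z \in S1 :|: T1 :|: S2 :|: T2 -> unique_nbr eH z.
  move=> zt; have [zV phz] := hsing z zt.
  exact: minor_singleton_unique_nbr hmm hVH zV phz (hdegG z zt).
have hsep : [disjoint S1 :|: T1 & S2 :|: T2] by apply: disjoint_setU2.
have hnd := no_common_edge esym eirr hR hB hsep hdeg hcon.
have [ys [uy sy] [halt|halt]] := chain_alt_cycle hc nu.
  apply: (no_alt_cycle hR hB d11 esym eirr _ hnd hdel uy sy halt).
  by move=> z zt; apply: hdeg; rewrite -setUA in_setU zt.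
apply: (no_alt_cycle hB hR d23 esym eirr _ _ _ uy sy halt).
- by move=> z zt; apply: hdeg; rewrite -setUA in_setU zt orbT.
- by move=> u v; rewrite andbC hnd.
- by move=> u v uV vV euv [h2 h1]; apply: (hdel u v uV vV euv).
Qed.
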